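(* For an integer $n\ge 0$ let $\Omega_n$ be the set of integer pairs $(p,q)$ with $0\le p\le n$, $0\le q\le n$, $(p,q)\ne(n,n)$, and let $\mathcal A_n$ be the linear span (over $\mathbb C$) of the rational functions $\frac{z^p\,\overline z^{\,q}}{(z-\overline z)^n}$, $(p,q)\in\Omega_n$, regarded as functions on the upper half-plane $\Lambda=\{z:\operatorname{Im}z>0\}$. Let $\mathcal A=\sum_{n\ge0}\mathcal A_n$. Consider the six operators $$\frac{\partial}{\partial z},\quad z\frac{\partial}{\partial z},\quad z^2\frac{\partial}{\partial z},\quad \frac{\partial}{\partial \overline z},\quad \overline z\frac{\partial}{\partial \overline z},\quad \overline z^{\,2}\frac{\partial}{\partial \overline z}.$$ Then: (a) $\mathcal A$ is invariant under each of these six operators; (b) the function $\frac{1}{z-\overline z}$ is cyclic in $\mathcal A$ for this family, i.e. the linear span of all functions obtained by applying finite products of these six operators (including the empty product) to $\frac1{z-\overline z}$ is equal to $\mathcal A$.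
   Context: $\frac{\partial}{\partial z}$, $\frac{\partial}{\partial\overline z}$ are the Wirtinger derivatives, $z$ and $\overline z$ are treated as independent variables in these rational functions. *)

(* formal rational functions in two independent variables
   z and zb (= \overline z), over a field F of characteristic 0
   (instantiated by the complex numbers). *)
From HB Require Import structures.
From mathcomp Require Import all_boot all_order all_algebra.
From mathcomp Require Export fraction.
Set Implicit Arguments. Unset Strict Implicit. Unset Printing Implicit Defensive.
Import Order.TTheory GRing.Theory Num.Theory.
Local Open Scope ring_scope.

Notation "x %:F" := (@FracField.tofrac _ x).

Section Defs.
Variable F : numClosedFieldType.

(* Bivariate polynomials: outer variable is z, inner variable is zb. *)
Definition Pol := {poly {poly F}}.
Definition RF := {fraction Pol}.

Definition zP : Pol := 'X.
Definition zbP : Pol := ('X)%:P.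
Definition zR : RF := (zP)%:F.
Definition zbR : RF := (zbP)%:F.
Definition cst (c : F) : RF := ((c%:P)%:P : Pol)%:F.

Definition dzP (p : Pol) : Pol := p^`().
Definition dzbP (p : Pol) : Pol := map_poly (fun c : {poly F} => c^`()) p.

(* extension to rational functions by the quotient rule
   (independent of the chosen representative) *)
Definition quot_deriv (d : Pol -> Pol) (f : RF) : RF :=
  let r := repr f in
  (d \n_r * \d_r - \n_r * d \d_r)%:F / ((\d_r) ^+ 2)%:F.

Definition dz : RF -> RF := quot_deriv dzP.
Definition dzb : RF -> RF := quot_deriv dzbP.

Definition Omega (n p q : nat) : bool :=
  [&& (p <= n)%N, (q <= n)%N & ~~ ((p == n) && (q == n))].

Definition gen (n p q : nat) : RF := zR ^+ p * zbR ^+ q / (zR - zbR) ^+ n.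

Definition inA (f : RF) : Prop :=
  exists s : seq (F * (nat * nat * nat)),
    all (fun t => Omega t.2.1.1 t.2.1.2 t.2.2) s /\
    f = \sum_(t <- s) cst t.1 * gen t.2.1.1 t.2.1.2 t.2.2.

Definition op (i : 'I_6) (f : RF) : RF :=
  match val i with
  | 0 => dz f
  | 1 => zR * dz f
  | 2 => zR ^+ 2 * dz f
  | 3 => dzb f
  | 4 => zbR * dzb f
  | _ => zbR ^+ 2 * dzb f
  end.

(* apply a finite product of operators (a word; [::] = identity) *)
Definition apply_word (w : seq 'I_6) (f : RF) : RF := foldr op f w.

Definition in_span_orbit (g f : RF) : Prop :=
  exists s : seq (F * seq 'I_6), f = \sum_(t <- s) cst t.1 * apply_word t.2 g.

End Defs.

(* The Wirtinger derivatives are derivations of the field C(z, zb) (the quotient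
   rule on a fraction field), so the six operators are C-linear and act on the
   generators g(n,p,q) = z^p zb^q / (z - zb)^n by explicit formulas such as
     z d/dz g(n,p,q) = p g(n,p,q) - n g(n+1,p+1,q).
   Together with g(n,p,q) = g(n+1,p+1,q) - g(n+1,p,q+1), these show that A is
   invariant.  Conversely, the new term g(n+1,...) always carries the coefficient
   n <> 0, so the formulas can be solved for it: by induction every generator of
   level n+1 is reached from level n, and level 1 from 1/(z - zb) = g(1,0,0). *)

From mathcomp Require Import all_boot all_order all_algebra.
From mathcomp Require Import ring zify.
Import GRing.Theory Num.Theory.
Local Open Scope ring_scope.
Set Implicit Arguments. Unset Strict Implicit.

Lemma tofrac_repr (R : idomainType) (f : {fraction R}) :
  f = (\n_(repr f))%:F / (\d_(repr f))%:F.
Proof.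
have d_neq0 : (\d_(repr f))%:F != 0 :> {fraction R} by rewrite tofrac_eq0 denom_ratioP.
apply: (mulIf d_neq0); rewrite mulfVK //.
rewrite -[f in LHS]reprK; unlock FracField.tofrac.
rewrite -[_ * _]/(FracField.mul _ _) !piE.
apply/eqmodP; rewrite /= FracField.equivfE /= reprK /FracField.mulf.
have one_neq0 := oner_neq0 R.
by rewrite !numden_Ratio ?mulf_neq0 ?denom_ratioP // !mulr1 mulrC.
Qed.

Definition derivation (R : pzRingType) (d : R -> R) : Prop :=
  {morph d : x y / x + y} /\ forall x y, d (x * y) = d x * y + x * d y.

Section Derivation.
Variables (R : pzRingType) (d : R -> R).
Hypothesis d_der : derivation d.

Let dD : {morph d : x y / x + y}. Proof. by case: d_der. Qed.
Let dM x y : d (x * y) = d x * y + x * d y. Proof. by case: d_der. Qed.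

Lemma derivation0 : d 0 = 0.
Proof. by apply: (addrI (d 0)); rewrite -dD !addr0. Qed.

Lemma derivation1 : d 1 = 0.
Proof.
have := dM 1 1; rewrite !mulr1 mul1r => d1_double.
by apply: (addrI (d 1)); rewrite addr0 -d1_double.
Qed.

Lemma derivationN x : d (- x) = - d x.
Proof. by apply: (addrI (d x)); rewrite -dD !subrr derivation0. Qed.

End Derivation.

Lemma derivationXn (R : comPzRingType) (d : R -> R) x n :
  derivation d -> d (x ^+ n) = n%:R * x ^+ n.-1 * d x.
Proof.
move=> d_der; have [_ dM] := d_der.
elim: n => [|n IH]; first by rewrite expr0 derivation1 //; ring.
rewrite exprS dM IH; case: n {IH} => [|n] /=; first by rewrite !expr0; ring.
by rewrite exprS -!natr1; ring.
Qed.

Lemma derivationV (K : fieldType) (d : K -> K) x :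
  derivation d -> d x^-1 = - d x / x ^+ 2.
Proof.
move=> d_der; have [_ dM] := d_der.
have [->|x_neq0] := eqVneq x 0; first by rewrite invr0 derivation0 // oppr0 mul0r.
have := dM x x^-1; rewrite mulfV // derivation1 // => /esym/eqP.
rewrite addr_eq0 => /eqP d_inv; apply: (mulfI x_neq0).
by rewrite -[x * _]opprK -d_inv; field.
Qed.

Lemma derivation_deriv (R : nzRingType) : derivation (@deriv R).
Proof. by split=> [p q|p q]; rewrite ?derivD ?derivM. Qed.

Lemma derivation_map_poly (R : nzRingType) (d : R -> R) :
  derivation d -> derivation (map_poly d : {poly R} -> {poly R}).
Proof.
move=> d_der; have [dD dM] := d_der.
have coef_d p i : (map_poly d p)`_i = d p`_i by rewrite coef_map_id0 // derivation0.
split=> [p q|p q]; apply/polyP => i; rewrite ?coefD ?coefM !coef_d ?coefD ?coefM //.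
rewrite -big_split (big_morph d dD (derivation0 d_der)) /=.
by apply: eq_bigr => j _; rewrite dM !coef_d.
Qed.

Lemma fraction_div_tofrac (R : idomainType) (f : {fraction R}) :
  exists a b, b != 0 /\ f = a%:F / b%:F.
Proof. by exists \n_(repr f), \d_(repr f); rewrite denom_ratioP -tofrac_repr. Qed.

Lemma quotient_rule_cross (K : fieldType) (a b c e da db dc de : K) :
  b != 0 -> e != 0 -> a * e = c * b -> da * e + a * de = dc * b + c * db ->
  (da * b - a * db) / b ^+ 2 = (dc * e - c * de) / e ^+ 2.
Proof.
move=> b_neq0 e_neq0 cross dcross.
have -> : dc = (da * e + a * de - c * db) / b by rewrite dcross addrK mulfK.
have -> : c = a * e / b by rewrite cross mulfK.
by field; rewrite b_neq0 e_neq0.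
Qed.

Lemma quotient_ruleD (K : fieldType) (a b c e da db dc de : K) :
  b != 0 -> e != 0 ->
  ((da * e + a * de + (dc * b + c * db)) * (b * e)
     - (a * e + c * b) * (db * e + b * de)) / (b * e) ^+ 2
  = (da * b - a * db) / b ^+ 2 + (dc * e - c * de) / e ^+ 2.
Proof. by move=> b_neq0 e_neq0; field; rewrite b_neq0 e_neq0. Qed.

Lemma quotient_ruleM (K : fieldType) (a b c e da db dc de : K) :
  b != 0 -> e != 0 ->
  ((da * c + a * dc) * (b * e) - a * c * (db * e + b * de)) / (b * e) ^+ 2
  = (da * b - a * db) / b ^+ 2 * (c / e) + a / b * ((dc * e - c * de) / e ^+ 2).
Proof. by move=> b_neq0 e_neq0; field; rewrite b_neq0 e_neq0. Qed.

Section FractionDerivation.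
Variables (R : idomainType) (d : R -> R).
Hypothesis d_der : derivation d.

Let dD : {morph d : x y / x + y}. Proof. by case: d_der. Qed.
Let dM x y : d (x * y) = d x * y + x * d y. Proof. by case: d_der. Qed.

(* The [quot_deriv] of the statement, over an arbitrary integral domain. *)
Definition frac_deriv (f : {fraction R}) : {fraction R} :=
  let r := repr f in (d \n_r * \d_r - \n_r * d \d_r)%:F / ((\d_r) ^+ 2)%:F.

Lemma quotient_rule_eq a b c e : b != 0 -> e != 0 -> a * e = c * b ->
  (d a * b - a * d b)%:F / (b ^+ 2)%:F = (d c * e - c * d e)%:F / (e ^+ 2)%:F
    :> {fraction R}.
Proof.
move=> b_neq0 e_neq0 cross; rewrite !(tofracB, tofracM, tofracXn).
apply: quotient_rule_cross; rewrite ?tofrac_eq0 //.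
  by rewrite -!tofracM cross.
by rewrite -!tofracM -!tofracD -!dM cross.
Qed.

Lemma frac_deriv_div a b : b != 0 ->
  frac_deriv (a%:F / b%:F) = (d a * b - a * d b)%:F / (b ^+ 2)%:F.
Proof.
move=> b_neq0; rewrite /frac_deriv; set r := repr _.
have r_neq0 : \d_r != 0 by apply: denom_ratioP.
apply: quotient_rule_eq => //; apply/eqP; rewrite -tofrac_eq !tofracM.
by rewrite -eqr_div ?tofrac_eq0 // -tofrac_repr.
Qed.

Lemma frac_deriv_tofrac a : frac_deriv a%:F = (d a)%:F.
Proof.
rewrite -[a%:F]divr1 -tofrac1 frac_deriv_div ?oner_neq0 //.
by rewrite (derivation1 d_der) mulr0 subr0 mulr1 expr1n tofrac1 divr1.
Qed.

Lemma derivation_frac_deriv : derivation frac_deriv.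
Proof.
split=> x y.
all: have [a [b [b_neq0 ->]]] := fraction_div_tofrac x.
all: have [c [e [e_neq0 ->]]] := fraction_div_tofrac y.
all: have bF : b%:F != 0 :> {fraction R} by rewrite tofrac_eq0.
all: have eF : e%:F != 0 :> {fraction R} by rewrite tofrac_eq0.
all: have be_neq0 : b * e != 0 by rewrite mulf_neq0.
- rewrite addf_div // -!tofracM -tofracD !frac_deriv_div // dD !dM.
  by rewrite !(tofracB, tofracD, tofracM, tofracXn) quotient_ruleD.
- rewrite mulf_div -!tofracM !frac_deriv_div // !dM.
  by rewrite !(tofracB, tofracD, tofracM, tofracXn) quotient_ruleM.
Qed.

End FractionDerivation.

Lemma derivation_quotient_monomials (K : fieldType) (D : K -> K) (x y : K) m p q :
  derivation D -> x - y != 0 ->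
  D (x ^+ p * y ^+ q / (x - y) ^+ m) =
      p%:R * (x ^+ p.-1 * y ^+ q / (x - y) ^+ m) * D x
    + q%:R * (x ^+ p * y ^+ q.-1 / (x - y) ^+ m) * D y
    - m%:R * (x ^+ p * y ^+ q / (x - y) ^+ m.+1) * (D x - D y).
Proof.
move=> D_der xy_neq0; have [dD dM] := D_der.
rewrite !dM (derivationV _ D_der) !(derivationXn _ _ D_der) dD (derivationN D_der).
case: m => [|m] /=; first by rewrite !expr0; ring.
by rewrite !exprS; field; rewrite expf_neq0 ?xy_neq0.
Qed.

Lemma quotient_monomials_split (K : fieldType) (x y : K) m p q : x - y != 0 ->
  x ^+ p * y ^+ q / (x - y) ^+ m =
    x ^+ p.+1 * y ^+ q / (x - y) ^+ m.+1 - x ^+ p * y ^+ q.+1 / (x - y) ^+ m.+1.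
Proof. by move=> xy_neq0; rewrite !exprS; field; rewrite xy_neq0 expf_neq0. Qed.

Section Wirtinger.
Variable F : numClosedFieldType.
Local Notation RF := (RF F).
Local Notation zR := (zR F).
Local Notation zbR := (zbR F).
Local Notation gen := (gen F).

Lemma derivation_dz : derivation (@dz F).
Proof. exact: derivation_frac_deriv (derivation_deriv _). Qed.

Lemma derivation_dzb : derivation (@dzb F).
Proof. exact: derivation_frac_deriv (derivation_map_poly (derivation_deriv _)). Qed.

Lemma dz_tofrac (a : Pol F) : dz (a%:F : RF) = (a^`())%:F.
Proof. exact: frac_deriv_tofrac (derivation_deriv _) a. Qed.

Lemma dzb_tofrac (a : Pol F) : dzb (a%:F : RF) = (dzbP a)%:F.
Proof. exact: frac_deriv_tofrac (derivation_map_poly (derivation_deriv _)) a. Qed.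

Lemma dz_z : dz zR = 1.
Proof. by rewrite dz_tofrac derivX tofrac1. Qed.

Lemma dz_zb : dz zbR = 0.
Proof. by rewrite dz_tofrac derivC tofrac0. Qed.

Lemma dzb_z : dzb zR = 0.
Proof.
rewrite dzb_tofrac -tofrac0; congr (_%:F); apply/polyP => i.
by rewrite coef_map /= coefX coef0; case: eqP; rewrite ?deriv0 // derivC.
Qed.

Lemma dzb_zb : dzb zbR = 1.
Proof. by rewrite dzb_tofrac /dzbP /zbP map_polyC /= derivX tofrac1. Qed.

Lemma dz_cst (c : F) : dz (cst c) = 0.
Proof. by rewrite dz_tofrac derivC tofrac0. Qed.

Lemma dzb_cst (c : F) : dzb (cst c) = 0.
Proof. by rewrite dzb_tofrac /dzbP map_polyC /= derivC tofrac0. Qed.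

Lemma z_sub_zb_neq0 : zR - zbR != 0.
Proof. by rewrite -tofracB tofrac_eq0 polyXsubC_eq0. Qed.

Lemma dz_gen m p q : dz (gen m p q) = p%:R * gen m p.-1 q - m%:R * gen m.+1 p q.
Proof.
rewrite /gen (derivation_quotient_monomials _ _ _ derivation_dz z_sub_zb_neq0).
by rewrite dz_z dz_zb mulr1 mulr0 addr0 subr0 mulr1.
Qed.

Lemma dzb_gen m p q : dzb (gen m p q) = q%:R * gen m p q.-1 + m%:R * gen m.+1 p q.
Proof.
rewrite /gen (derivation_quotient_monomials _ _ _ derivation_dzb z_sub_zb_neq0).
by rewrite dzb_z dzb_zb mulr0 mulr1 add0r sub0r mulrN1 opprK.
Qed.

Lemma z_dz_gen m p q :
  zR * dz (gen m p q) = p%:R * gen m p q - m%:R * gen m.+1 p.+1 q.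
Proof.
rewrite dz_gen /gen; move: (zR) (zbR) => z zb.
by case: p => [|p]; rewrite /= ?exprS; ring.
Qed.

Lemma z2_dz_gen m p q :
  zR ^+ 2 * dz (gen m p q) = p%:R * gen m p.+1 q - m%:R * gen m.+1 p.+2 q.
Proof.
rewrite dz_gen /gen; move: (zR) (zbR) => z zb.
by case: p => [|p]; rewrite /= !exprS; ring.
Qed.

Lemma zb_dzb_gen m p q :
  zbR * dzb (gen m p q) = q%:R * gen m p q + m%:R * gen m.+1 p q.+1.
Proof.
rewrite dzb_gen /gen; move: (zR) (zbR) => z zb.
by case: q => [|q]; rewrite /= ?exprS; ring.
Qed.

Lemma zb2_dzb_gen m p q :
  zbR ^+ 2 * dzb (gen m p q) = q%:R * gen m p q.+1 + m%:R * gen m.+1 p q.+2.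
Proof.
rewrite dzb_gen /gen; move: (zR) (zbR) => z zb.
by case: q => [|q]; rewrite /= !exprS; ring.
Qed.

Lemma gen_split m p q : gen m p q = gen m.+1 p.+1 q - gen m.+1 p q.+1.
Proof. exact: quotient_monomials_split z_sub_zb_neq0. Qed.

End Wirtinger.

Section Span.
Variable F : numClosedFieldType.
Local Notation RF := (RF F).
Local Notation cst := (@cst F).

Lemma cstM : {morph cst : a b / a * b}.
Proof. by move=> a b; rewrite /cst !rmorphM. Qed.

Lemma cst_nat k : cst k%:R = k%:R.
Proof. by rewrite /cst !rmorph_nat. Qed.

Lemma cst0 : cst 0 = 0. Proof. exact: (cst_nat 0). Qed.
Lemma cst1 : cst 1 = 1. Proof. exact: (cst_nat 1). Qed.

Lemma cstN1 : cst (-1) = -1.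
Proof. by rewrite /cst !rmorphN1. Qed.

Definition lin_span (T : Type) (P : pred T) (v : T -> RF) (f : RF) : Prop :=
  exists s : seq (F * T), all (fun t => P t.2) s /\ f = \sum_(t <- s) cst t.1 * v t.2.

Variables (T : Type) (P : pred T) (v : T -> RF).
Local Notation S := (lin_span P v).

Lemma lin_span0 : S 0.
Proof. by exists [::]; rewrite big_nil. Qed.

Lemma lin_span_gen t : P t -> S (v t).
Proof. by move=> Pt; exists [:: (1, t)]; rewrite /= Pt big_seq1 cst1 mul1r. Qed.

Lemma lin_spanD f g : S f -> S g -> S (f + g).
Proof.
move=> [s [Ps ->]] [s' [Ps' ->]].
by exists (s ++ s'); rewrite all_cat Ps Ps' big_cat.
Qed.

Lemma lin_spanZ c f : S f -> S (cst c * f).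
Proof.
move=> [s [Ps ->]]; exists [seq (c * t.1, t.2) | t <- s]; rewrite all_map.
split=> //; rewrite big_map mulr_sumr; apply: eq_bigr => t _.
by rewrite cstM mulrA.
Qed.

Lemma lin_spanN f : S f -> S (- f).
Proof. by rewrite -mulN1r -cstN1; apply: lin_spanZ. Qed.

Lemma lin_spanB f g : S f -> S g -> S (f - g).
Proof. by move=> Sf /lin_spanN; apply: lin_spanD. Qed.

Lemma lin_span_natr k f : S f -> S (k%:R * f).
Proof. by rewrite -cst_nat; apply: lin_spanZ. Qed.

Lemma lin_span_natrK k f : (0 < k)%N -> S (k%:R * f) -> S f.
Proof.
move=> k_gt0 /(lin_spanZ k%:R^-1); rewrite mulrA -cst_nat -cstM mulVf ?cst1 ?mul1r //.
by rewrite pnatr_eq0 -lt0n.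
Qed.

End Span.

Arguments lin_span_gen {F T P v} t.

Lemma lin_span_map (F : numClosedFieldType) (T T' : Type)
    (P : pred T) (P' : pred T') (v : T -> RF F) (v' : T' -> RF F) (L : RF F -> RF F) :
  {morph L : f g / f + g} -> (forall c f, L (cst c * f) = cst c * L f) ->
  (forall t, P t -> lin_span P' v' (L (v t))) ->
  forall f, lin_span P v f -> lin_span P' v' (L f).
Proof.
move=> LD LZ Lv f [s [Ps ->]]; elim: s Ps => [_|t s IHs /andP [Pt Ps]].
  by rewrite big_nil -(mul0r 0) -cst0 LZ cst0 mul0r; apply: lin_span0.
rewrite big_cons LD LZ; apply: lin_spanD; last exact: IHs.
by apply: lin_spanZ; apply: Lv.
Qed.

Lemma lin_span_sub (F : numClosedFieldType) (T T' : Type)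
    (P : pred T) (P' : pred T') (v : T -> RF F) (v' : T' -> RF F) :
  (forall t, P t -> lin_span P' v' (v t)) ->
  forall f, lin_span P v f -> lin_span P' v' f.
Proof. exact: (@lin_span_map _ _ _ _ _ _ _ id). Qed.

Section Operators.
Variable F : numClosedFieldType.
Local Notation RF := (RF F).
Local Notation zR := (zR F).
Local Notation zbR := (zbR F).
Local Notation gen := (gen F).
Local Notation op := (@op F).
Local Notation dz := (@dz F).
Local Notation dzb := (@dzb F).

Lemma op_cases (Pr : (RF -> RF) -> Prop) :
  Pr dz -> Pr (fun f => zR * dz f) -> Pr (fun f => zR ^+ 2 * dz f) ->
  Pr dzb -> Pr (fun f => zbR * dzb f) -> Pr (fun f => zbR ^+ 2 * dzb f) ->
  forall i, Pr (op i).
Proof. by move=> P0 P1 P2 P3 P4 P5 [[|[|[|[|[|[|i]]]]]] Hi]. Qed.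

Lemma op_add i : {morph op i : f g / f + g}.
Proof.
have [[dzD _] [dzbD _]] := (derivation_dz F, derivation_dzb F).
move: i; apply: (op_cases (Pr := fun O : RF -> RF => {morph O : f g / f + g})) => f g.
- exact: dzD.
- by rewrite dzD mulrDr.
- by rewrite dzD mulrDr.
- exact: dzbD.
- by rewrite dzbD mulrDr.
- by rewrite dzbD mulrDr.
Qed.

Lemma op_cst_mul i c f : op i (cst c * f) = cst c * op i f.
Proof.
have [[_ dzM] [_ dzbM]] := (derivation_dz F, derivation_dzb F).
move: i; apply: (op_cases (Pr := fun O : RF -> RF => O (cst c * f) = cst c * O f)).
- by rewrite dzM dz_cst mul0r add0r.
- by rewrite dzM dz_cst mul0r add0r mulrCA.
- by rewrite dzM dz_cst mul0r add0r mulrCA.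
- by rewrite dzbM dzb_cst mul0r add0r.
- by rewrite dzbM dzb_cst mul0r add0r mulrCA.
- by rewrite dzbM dzb_cst mul0r add0r mulrCA.
Qed.

Local Notation A :=
  (lin_span (fun t => Omega t.1.1 t.1.2 t.2) (fun t => gen t.1.1 t.1.2 t.2)).

Lemma inAE : @inA F = A.
Proof. by []. Qed.

Lemma A_natr_gen k n p q : k = 0%N \/ Omega n p q -> A (k%:R * gen n p q).
Proof.
case=> [->|Om]; first by rewrite mul0r; apply: lin_span0.
by apply: lin_span_natr; apply: (lin_span_gen (n, p, q)).
Qed.

Lemma A_op_gen i n p q : Omega n p q -> A (op i (gen n p q)).
Proof.
move=> Om; have := Om; rewrite /Omega => /and3P [p_le q_le not_nn].
move: i; apply: (op_cases (Pr := fun O : RF -> RF => A (O (gen n p q)))).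
- rewrite dz_gen; apply: lin_spanB; apply: A_natr_gen;
    by case: p p_le not_nn {Om}; rewrite /Omega /=; lia.
- by rewrite z_dz_gen; apply: lin_spanB; apply: A_natr_gen; rewrite /Omega; lia.
- rewrite z2_dz_gen (gen_split _ n p.+1).
  have -> : forall a b : RF, p%:R * (a - b) - n%:R * a = - ((n - p)%:R * a) - p%:R * b.
    by move=> a b; rewrite natrB //; ring.
  by apply: lin_spanB; [apply: lin_spanN|]; apply: A_natr_gen; rewrite /Omega; lia.
- rewrite dzb_gen; apply: lin_spanD; apply: A_natr_gen;
    by case: q q_le not_nn {Om}; rewrite /Omega /=; lia.
- by rewrite zb_dzb_gen; apply: lin_spanD; apply: A_natr_gen; rewrite /Omega; lia.
- rewrite zb2_dzb_gen (gen_split _ n p).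
  have -> : forall a b : RF, q%:R * (a - b) + n%:R * b = q%:R * a + (n - q)%:R * b.
    by move=> a b; rewrite natrB //; ring.
  by apply: lin_spanD; apply: A_natr_gen; rewrite /Omega; lia.
Qed.

Lemma A_op i f : A f -> A (op i f).
Proof.
apply: lin_span_map => [f1 f2|c f1|[[n p] q] /= Om].
- exact: op_add.
- exact: op_cst_mul.
- exact: A_op_gen.
Qed.

End Operators.

Section Orbit.
Variables (F : numClosedFieldType) (g : RF F).
Local Notation RF := (RF F).
Local Notation zR := (zR F).
Local Notation zbR := (zbR F).
Local Notation gen := (gen F).
Local Notation dz := (@dz F).
Local Notation dzb := (@dzb F).
Local Notation S := (lin_span predT (fun w => apply_word w g)).

Lemma in_span_orbitE f : in_span_orbit g f <-> S f.
Proof.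
split=> [[s ->]|[s [_ ->]]]; last by exists s.
by exists s; split=> //; apply/allP.
Qed.

Lemma orbit_span_op i f : S f -> S (op i f).
Proof.
apply: lin_span_map => [f1 f2|c f1|w _]; [exact: op_add|exact: op_cst_mul|].
exact: (lin_span_gen (i :: w)).
Qed.

Lemma orbit_span_dz_ops f : S f -> [/\ S (dz f), S (zR * dz f) & S (zR ^+ 2 * dz f)].
Proof.
move=> Sf; split.
- exact: (orbit_span_op (@Ordinal 6 0 isT)).
- exact: (orbit_span_op (@Ordinal 6 1 isT)).
- exact: (orbit_span_op (@Ordinal 6 2 isT)).
Qed.

Lemma orbit_span_dzb_ops f :
  S f -> [/\ S (dzb f), S (zbR * dzb f) & S (zbR ^+ 2 * dzb f)].
Proof.
move=> Sf; split.
- exact: (orbit_span_op (@Ordinal 6 3 isT)).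
- exact: (orbit_span_op (@Ordinal 6 4 isT)).
- exact: (orbit_span_op (@Ordinal 6 5 isT)).
Qed.

Section Step.
Variable n : nat.
Hypothesis n_gt0 : (0 < n)%N.

Lemma orbit_span_gen_p0 q : S (gen n 0 q) -> S (gen n.+1 0 q).
Proof.
move=> /orbit_span_dz_ops [S_dz _ _]; apply: (lin_span_natrK n_gt0).
by move/lin_spanN: S_dz; rewrite dz_gen mul0r sub0r opprK.
Qed.

Lemma orbit_span_genSp p q : S (gen n p q) -> S (gen n.+1 p.+1 q).
Proof.
move=> S_gen; have [_ S_dz _] := orbit_span_dz_ops S_gen.
apply: (lin_span_natrK n_gt0); move: (lin_spanB (lin_span_natr p S_gen) S_dz).
by rewrite z_dz_gen opprB addrC subrK.
Qed.

Lemma orbit_span_genSq p q : S (gen n p q) -> S (gen n.+1 p q.+1).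
Proof.
move=> S_gen; have [_ S_dzb _] := orbit_span_dzb_ops S_gen.
apply: (lin_span_natrK n_gt0); move: (lin_spanB S_dzb (lin_span_natr q S_gen)).
by rewrite zb_dzb_gen addrC addKr.
Qed.

Lemma orbit_span_genSpq_pmax q : S (gen n n q) -> S (gen n.+1 n.+1 q.+1).
Proof.
move=> S_gen; have [_ _ S_dz] := orbit_span_dz_ops S_gen.
apply: (lin_span_natrK n_gt0); move/lin_spanN: S_dz.
by rewrite z2_dz_gen (gen_split _ n n.+1) mulrBr addrAC subrr sub0r opprK.
Qed.

Lemma orbit_span_genSpq_qmax p : S (gen n p n) -> S (gen n.+1 p.+1 n.+1).
Proof.
move=> S_gen; have [_ _ S_dzb] := orbit_span_dzb_ops S_gen.
apply: (lin_span_natrK n_gt0); move: S_dzb.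
by rewrite zb2_dzb_gen (gen_split _ n p) mulrBr subrK.
Qed.

Lemma orbit_span_level_succ :
  (forall p q, Omega n p q -> S (gen n p q)) ->
  forall p q, Omega n.+1 p q -> S (gen n.+1 p q).
Proof.
move=> IH [|p] [|q] Om.
- by apply: orbit_span_gen_p0; apply: IH; rewrite /Omega; lia.
- by apply: orbit_span_genSq; apply: IH; move: Om; rewrite /Omega; lia.
- by apply: orbit_span_genSp; apply: IH; move: Om; rewrite /Omega; lia.
have [Om_p|not_Om_p] := boolP (Omega n p q.+1); first by apply/orbit_span_genSp/IH.
have [Om_q|not_Om_q] := boolP (Omega n p.+1 q); first by apply/orbit_span_genSq/IH.
have [[-> ->]|[-> ->]] : p = n /\ q = n.-1 \/ p = n.-1 /\ q = n.
  by move: Om not_Om_p not_Om_q; rewrite /Omega; lia.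
- by apply/orbit_span_genSpq_pmax/IH; rewrite /Omega; lia.
- by apply/orbit_span_genSpq_qmax/IH; rewrite /Omega; lia.
Qed.

End Step.

(* Besides 1/(z - zb), level 1 is reached only from above: z/(z - zb) and
   zb/(z - zb) are split, via [gen_split], into generators of levels 2 and 3. *)
Lemma orbit_span_level1 :
  S (gen 1 0 0) -> forall p q, Omega 1 p q -> S (gen 1 p q).
Proof.
move=> S100.
have S220 : S (gen 2 2 0).
  have [_ _ S_dz] := orbit_span_dz_ops S100.
  by move/lin_spanN: S_dz; rewrite z2_dz_gen mul0r sub0r mul1r opprK.
have S202 : S (gen 2 0 2).
  have [_ _ S_dzb] := orbit_span_dzb_ops S100.
  by move: S_dzb; rewrite zb2_dzb_gen mul0r add0r mul1r.
have S211 : S (gen 2 1 1).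
  rewrite gen_split; apply: lin_spanB.
  - exact: orbit_span_genSq S220.
  - exact: orbit_span_genSp S202.
by move=> [|[|//]] [|[|//]] //= _; rewrite gen_split; apply: lin_spanB.
Qed.

Lemma orbit_span_A :
  S (gen 1 0 0) -> forall n p q, Omega n p q -> S (gen n p q).
Proof.
move=> S100; elim=> [|[|n] IH] p q Om.
- by move: Om; rewrite /Omega; lia.
- exact: orbit_span_level1.
- exact: orbit_span_level_succ IH _ _ Om.
Qed.

End Orbit.

Theorem lemma1 (F : numClosedFieldType) :
  (forall (i : 'I_6) (f : RF F), inA f -> inA (op i f)) /\
  (forall f : RF F, in_span_orbit (1 / (zR F - zbR F)) f <-> inA f).
Proof.
split=> [i f|f]; first by rewrite inAE; apply: A_op.
have -> : 1 / (zR F - zbR F) = gen F 1 0 0 by rewrite /gen expr0 mulr1 expr1.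
rewrite in_span_orbitE inAE; split; apply: lin_span_sub.
- by elim=> [|i w IHw] _; [apply: (lin_span_gen (1, 0, 0)) | apply: A_op; apply: IHw].
- by move=> [[n p] q] /= Om; apply: orbit_span_A => //; apply: (lin_span_gen [::]).
Qed.
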